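(* Define $A_{2}=\frac{1}{\sqrt2}\begin{bmatrix}1&1\\1&-1\end{bmatrix}$ and, for $k\ge1$, $A_{2^{k+1}}=\frac{1}{\sqrt{\beta(A_{2^k})^2+1}}\begin{bmatrix}\beta(A_{2^k})A_{2^k} & I_{2^k}\\ \beta(A_{2^k})A_{2^k} & -I_{2^k}\end{bmatrix}$. Then for every $k\ge1$, $A_{2^k}$ is a $2^k\times 2^k$ matrix with rows of Euclidean norm $1$ and $$\beta(A_{2^k})=\sqrt{k+1}=\sqrt{\log_2(n)+1},\quad n=2^k.$$
   Context: For $A\in\mathbb{R}^{m\times n}$, $\beta(A)=\frac{1}{2^n}\sum_{x\in\{-1,1\}^n}\|Ax\|_\infty$. $I_N$ is the $N\times N$ identity matrix. *)

From HB Require Import structures.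
From mathcomp Require Import all_boot all_order all_algebra.
From mathcomp Require Import reals.
Set Implicit Arguments. Unset Strict Implicit. Unset Printing Implicit Defensive.
Import Order.TTheory GRing.Theory Num.Theory.
Local Open Scope ring_scope.

Section Defs.
Variable R : realType.

(* sign vectors x in {-1,1}^n are encoded by x : {ffun 'I_n -> bool} *)
Definition sgn_of (b : bool) : R := if b then 1 else -1.

Definition infnorm m (y : 'I_m -> R) : R := \big[Num.max/0]_(i < m) `|y i|.

Definition beta m n (A : 'M[R]_(m, n)) : R :=
  (2%:R ^+ n)^-1 *
  \sum_(x : {ffun 'I_n -> bool})
     infnorm (fun i : 'I_m => \sum_(j < n) A i j * sgn_of (x j)).

Lemma pow2S k : (2 ^ k.+1 + 2 ^ k.+1 = 2 ^ k.+2)%N.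
Proof. by rewrite [(2 ^ k.+2)%N]expnS mul2n addnn. Qed.

(* Asucc k = A_{2^(k+1)}, defined by the recursion of the paper. *)
Fixpoint Asucc (k : nat) : 'M[R]_(2 ^ k.+1) :=
  match k return 'M[R]_(2 ^ k.+1) with
  | 0 => (Num.sqrt 2%:R)^-1 *:
           \matrix_(i < 2 ^ 1, j < 2 ^ 1)
              (if ((i : nat) == 1%N) && ((j : nat) == 1%N) then -1 else 1)
  | k'.+1 =>
      let B := Asucc k' in
      let b := beta B in
      (Num.sqrt (b ^+ 2 + 1))^-1 *:
        castmx (pow2S k', pow2S k')
          (block_mx (b *: B) 1%:M (b *: B) (- 1%:M))
  end.

(* Apow k = A_{2^k} for k >= 1 (Apow 0 is an irrelevant placeholder). *)
Definition Apow (k : nat) : 'M[R]_(2 ^ k) :=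
  match k return 'M[R]_(2 ^ k) with
  | 0 => 1%:M
  | k'.+1 => Asucc k'
  end.

End Defs.

(** For a sign vector (y, z), the entries of [[A, I], [A, -I]] (y, z) are
    (A y)_i + z_i and (A y)_i - z_i; for each i one of them has modulus |(A y)_i| + 1,
    so the sup-norm is exactly ||A y||_oo + 1 and, averaging, beta grows by exactly 1.
    With A = b B, b = beta(B), and the normalisation by sqrt(b^2 + 1), the recursion
    therefore sends beta(B) to sqrt(beta(B)^2 + 1) and rows of norm 1 to rows of norm 1.
    Since A_2 is itself the recursion applied to the 1 x 1 matrix (1), whose beta is 1,
    induction gives beta(A_(2^k))^2 = k + 1. *)

From mathcomp Require Import all_boot all_order all_algebra.
From mathcomp Require Import reals.
From mathcomp Require Import ring lra.
Import Order.TTheory GRing.Theory Num.Theory.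
Local Open Scope ring_scope.

Lemma maxr_normDB (R : realDomainType) (a c : R) :
  Num.max `|a + c| `|a - c| = `|a| + `|c|.
Proof.
have [ha|ha] := ger0P a; have [hc|hc] := ger0P c;
have [h1|h1] := ger0P (a + c); have [h2|h2] := ger0P (a - c); case: lerP; lra.
Qed.

Section SignVectors.
Variable T : finType.

Definition glue {m n} (y : {ffun 'I_m -> T}) (z : {ffun 'I_n -> T}) :
    {ffun 'I_(m + n) -> T} :=
  [ffun i => match split i with inl a => y a | inr b => z b end].

Lemma sum_ffun_glue (V : nmodType) m n (F : {ffun 'I_(m + n) -> T} -> V) :
  \sum_x F x = \sum_(y : {ffun 'I_m -> T}) \sum_(z : {ffun 'I_n -> T}) F (glue y z).
Proof.
rewrite pair_big /=; apply: (reindex (fun p => glue p.1 p.2)).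
exists (fun x : {ffun 'I_(m + n) -> T} =>
  ([ffun a => x (lshift n a)] : {ffun 'I_m -> T},
   [ffun b => x (rshift m b)] : {ffun 'I_n -> T})).
  move=> [y z] _ /=; congr pair; apply/ffunP => a; rewrite !ffunE.
    by rewrite (unsplitK (inl _ a)).
  by rewrite (unsplitK (inr _ a)).
by move=> x _; apply/ffunP => i; rewrite !ffunE; case: split_ordP => j ->; rewrite ffunE.
Qed.

End SignVectors.

Arguments glue {T m n}.

Section Infnorm.
Variable R : realType.

Lemma eq_infnorm m (u v : 'I_m -> R) : u =1 v -> infnorm u = infnorm v.
Proof. by move=> uv; apply: eq_bigr => i _; rewrite uv. Qed.

Lemma infnorm_ge0 m (u : 'I_m -> R) : 0 <= infnorm u.
Proof.
by apply: (big_ind (fun x : R => 0 <= x)) => //= x y x_ge0 _; rewrite le_max x_ge0.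
Qed.

Lemma infnormMl m (c : R) (u : 'I_m -> R) : 0 <= c ->
  infnorm (fun i => c * u i) = c * infnorm u.
Proof.
move=> c_ge0; rewrite /infnorm.
rewrite (big_morph (fun x => c * x) (fun a b => maxr_pMr a b c_ge0) (mulr0 c)).
by apply: eq_bigr => i _; rewrite normrM (ger0_norm c_ge0).
Qed.

Lemma infnorm_col_addsub N (u s : 'cV[R]_N) c : (0 < N)%N ->
    (forall i, `|s i 0| = c) ->
  infnorm (fun i => col_mx (u + s) (u - s) i 0) = infnorm (fun i => u i 0) + c.
Proof.
move=> N_gt0 hs; have c_ge0 : 0 <= c by rewrite -(hs (Ordinal N_gt0)).
apply: le_anti; apply/andP; split.
  apply/bigmax_leP; split=> [|i _]; first by rewrite addr_ge0 ?infnorm_ge0.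
  case: (split_ordP i) => j ->; rewrite ?col_mxEu ?col_mxEd !mxE -(hs j).
    by apply: le_trans (ler_normD _ _) _; rewrite lerD2r (le_bigmax 0 (fun i => `|u i 0|)).
  by apply: le_trans (ler_normB _ _) _; rewrite lerD2r (le_bigmax 0 (fun i => `|u i 0|)).
rewrite /infnorm; have [j0 _ ->] := eq_bigmax (x := 0) (Ordinal N_gt0) xpredT
  (fun i => `|u i 0|) isT (fun i _ => normr_ge0 _).
rewrite -(hs j0) -maxr_normDB ge_max.
have := le_bigmax 0 (fun i => `|col_mx (u + s) (u - s) i 0|) (lshift N j0).
have := le_bigmax 0 (fun i => `|col_mx (u + s) (u - s) i 0|) (rshift N j0).
by rewrite /= col_mxEu col_mxEd !mxE => -> ->.
Qed.

End Infnorm.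

Section Beta.
Variable R : realType.

Definition sgnv {n} (x : {ffun 'I_n -> bool}) : 'cV[R]_n := \col_j sgn_of R (x j).

Lemma normr_sgn_of (b : bool) : `|sgn_of R b| = 1.
Proof. by case: b; rewrite /sgn_of ?normrN normr1. Qed.

Lemma sgnv_glue m n (y : {ffun 'I_m -> bool}) (z : {ffun 'I_n -> bool}) :
  sgnv (glue y z) = col_mx (sgnv y) (sgnv z).
Proof.
by apply/matrixP => i j; rewrite !mxE ffunE; case: (split i) => a; rewrite mxE.
Qed.

Lemma betaE m n (A : 'M[R]_(m, n)) :
  beta A = (2%:R ^+ n)^-1 * \sum_x infnorm (fun i => (A *m sgnv x) i 0).
Proof.
congr (_ * _); apply: eq_bigr => x _; apply: eq_infnorm => i.
by rewrite mxE; apply: eq_bigr => j _; rewrite mxE.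
Qed.

Lemma beta_ge0 m n (A : 'M[R]_(m, n)) : 0 <= beta A.
Proof.
rewrite mulr_ge0 ?invr_ge0 ?exprn_ge0 ?ler0n //.
by apply: sumr_ge0 => x _; apply: infnorm_ge0.
Qed.

Lemma betaZ m n (c : R) (A : 'M[R]_(m, n)) : 0 <= c -> beta (c *: A) = c * beta A.
Proof.
move=> c_ge0; rewrite !betaE [RHS]mulrCA [c * _]mulr_sumr; congr (_ * _).
apply: eq_bigr => x _; rewrite -infnormMl //; apply: eq_infnorm => i.
by rewrite -scalemxAl mxE.
Qed.

Lemma beta_castmx m m' n n' (em : m = m') (en : n = n') (A : 'M[R]_(m, n)) :
  beta (castmx (em, en) A) = beta A.
Proof. by case: m' / em; case: n' / en; rewrite castmx_id. Qed.

Lemma beta_block m n (A : 'M[R]_(m, n)) : (0 < m)%N ->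
  beta (block_mx A 1%:M A (- 1%:M)) = beta A + 1.
Proof.
move=> m_gt0; rewrite !betaE sum_ffun_glue.
have glued y z : infnorm (fun i => (block_mx A 1%:M A (- 1%:M) *m sgnv (glue y z)) i 0)
    = infnorm (fun i => (A *m sgnv y) i 0) + 1.
  rewrite sgnv_glue mul_block_col mulNmx !mul1mx.
  by apply: infnorm_col_addsub => // i; rewrite mxE normr_sgn_of.
under eq_bigr => y _ do under eq_bigr => z _ do rewrite glued.
under eq_bigr => y _ do rewrite sumr_const card_ffun card_bool card_ord -mulr_natr.
rewrite -mulr_suml big_split /= sumr_const card_ffun card_bool card_ord.
rewrite -mulr_natr mul1r !natrX exprD.
have two_pow_neq0 k : (2%:R : R) ^+ k != 0 by rewrite expf_neq0 // pnatr_eq0.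
by field; rewrite !two_pow_neq0.
Qed.

Lemma beta_mx1 : beta (1%:M : 'M[R]_1) = 1.
Proof.
rewrite betaE.
have unit_norm (x : {ffun 'I_1 -> bool}) : infnorm (fun i => (1%:M *m sgnv x) i 0) = 1.
  by rewrite mul1mx /infnorm big_ord_recl big_ord0 mxE normr_sgn_of max_l ?ler01.
under eq_bigr => x _ do rewrite unit_norm.
by rewrite sumr_const card_ffun card_bool card_ord mulVf ?pnatr_eq0.
Qed.

Lemma sum_sqr_mx1_row {m} (i : 'I_m) : \sum_(j < m) (1%:M : 'M[R]_m) i j ^+ 2 = 1.
Proof.
rewrite (bigD1 i) //= big1 ?addr0 => [|j ji]; first by rewrite mxE eqxx expr1n.
by rewrite mxE eq_sym (negbTE ji) expr0n.
Qed.

Lemma sum_sqr_block_row {m n} (A : 'M[R]_(m, n)) r :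
    (forall i, \sum_(j < n) A i j ^+ 2 = r) ->
  forall i, \sum_(j < n + m) block_mx A 1%:M A (- 1%:M) i j ^+ 2 = r + 1.
Proof.
move=> hA i; rewrite big_split_ord /=.
case: (split_ordP i) => k ->; rewrite -(hA k) -[in RHS](sum_sqr_mx1_row k);
  congr (_ + _); apply: eq_bigr => j _.
- by rewrite block_mxEul.
- by rewrite block_mxEur.
- by rewrite block_mxEdl.
- by rewrite block_mxEdr mxE sqrrN.
Qed.

Lemma sum_sqr_castmx_row m m' n n' (em : m = m') (en : n = n') (A : 'M[R]_(m, n)) r :
    (forall i, \sum_(j < n) A i j ^+ 2 = r) ->
  forall i, \sum_(j < n') castmx (em, en) A i j ^+ 2 = r.
Proof. by case: m' / em; case: n' / en; rewrite castmx_id. Qed.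

Definition Astep {N} (B : 'M[R]_N) : 'M[R]_(N + N) :=
  (Num.sqrt (beta B ^+ 2 + 1))^-1 *:
    block_mx (beta B *: B) 1%:M (beta B *: B) (- 1%:M).

Lemma beta_Astep N (B : 'M[R]_N) : (0 < N)%N ->
  beta (Astep B) = Num.sqrt (beta B ^+ 2 + 1).
Proof.
move=> N_gt0; set y := beta B ^+ 2 + 1.
have y_gt0 : 0 < y by rewrite ltr_wpDl ?sqr_ge0.
rewrite betaZ ?invr_ge0 ?sqrtr_ge0 // beta_block // betaZ ?beta_ge0 // -expr2 -/y.
by rewrite -{2}(sqr_sqrtr (ltW y_gt0)) expr2 mulKf // gt_eqF ?sqrtr_gt0.
Qed.

Lemma sum_sqr_Astep_row N (B : 'M[R]_N) : (forall i, \sum_(j < N) B i j ^+ 2 = 1) ->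
  forall i, \sum_(j < N + N) Astep B i j ^+ 2 = 1.
Proof.
move=> hB i; set b := beta B.
have bB_rows k : \sum_(j < N) (b *: B) k j ^+ 2 = b ^+ 2.
  by under eq_bigr do rewrite mxE exprMn; rewrite -mulr_sumr hB mulr1.
under eq_bigr do rewrite mxE exprMn.
rewrite -mulr_sumr (sum_sqr_block_row _ _ bB_rows) exprVn sqr_sqrtr ?mulVf //.
  by rewrite gt_eqF // ltr_wpDl ?sqr_ge0.
by rewrite addr_ge0 ?sqr_ge0.
Qed.

Lemma Asucc0E : Asucc R 0 = castmx (erefl, erefl) (Astep (1%:M : 'M[R]_1)).
Proof.
rewrite castmx_id /Astep beta_mx1 expr1n scale1r /=; congr (_ *: _).
apply/matrixP => i j; rewrite !mxE.
by case: (@split_ordP 1 1 i) => a ->; rewrite !mxE;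
  case: (@split_ordP 1 1 j) => b ->; rewrite !mxE ?ord1 ?mxE ?mulr1.
Qed.

Lemma AsuccSE k :
  Asucc R k.+1 = castmx (pow2S k, pow2S k) (Astep (Asucc R k)).
Proof. by apply/matrixP => i j; rewrite /= [LHS]mxE !castmxE [RHS]mxE. Qed.

Lemma Asucc_spec k :
  (forall i, \sum_(j < 2 ^ k.+1) Asucc R k i j ^+ 2 = 1) /\
  beta (Asucc R k) = Num.sqrt (k.+1%:R + 1).
Proof.
elim: k => [|k [rows_k beta_k]].
  rewrite Asucc0E beta_castmx beta_Astep // beta_mx1 expr1n.
  split=> //; apply: sum_sqr_castmx_row; apply: sum_sqr_Astep_row; exact: sum_sqr_mx1_row.
rewrite AsuccSE beta_castmx beta_Astep ?expn_gt0 // beta_k sqr_sqrtr ?addr_ge0 //.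
by split; [apply: sum_sqr_castmx_row; apply: sum_sqr_Astep_row | rewrite natr1].
Qed.

End Beta.

Theorem corollary4 (R : realType) (k : nat) (hk : (1 <= k)%N) :
  (forall i : 'I_(2 ^ k),
      Num.sqrt (\sum_(j < 2 ^ k) (Apow R k i j) ^+ 2) = 1) /\
  beta (Apow R k) = Num.sqrt (k%:R + 1).
Proof.
case: k hk => [//|k] _ /=.
have [rows_one beta_k] := Asucc_spec R k.
by split => [i|]; rewrite ?rows_one ?sqrtr1.
Qed.
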